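(* Let $q>1$, let $\delta_0,\dots,\delta_{m-1}$ be positive numbers, and set $V_i=\sum_{j=i}^{m-1}\delta_j$ for $0\le i\le m-1$. Then $$\sum_{i=0}^{m-1}\frac{V_i^q}{\delta_i}\ge\frac{q-1}4\sum_{j=1}^{m-1}jV_j^{q-1}.$$ *)

From Stdlib Require Import Reals Lra.
Open Scope R_scope.

(* V delta m i = sum_{j=i}^{m-1} delta j  (empty sum = 0 when i >= m) *)
Fixpoint tail_sum (delta : nat -> R) (i k : nat) : R :=
  match k with
  | O => 0
  | S k' => delta i + tail_sum delta (S i) k'
  end.

Definition V (delta : nat -> R) (m i : nat) : R := tail_sum delta i (m - i).

Fixpoint rsum (f : nat -> R) (a k : nat) : R :=
  match k with
  | O => 0
  | S k' => f a + rsum f (S a) k'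
  end.

(* Write [p = q - 1].  Since [V (i+1) = V i - delta i], the elementary bound
   [(1 - t)^p (1 + p t) <= 1] gives [V (i+1)^p (V i + p delta i) <= V i^q].
   Together with a quadratic inequality this yields, for each [i],
     [p/4 * (i V_i^p + (i+1)^2 V_(i+1)^p - i^2 V_i^p) <= V_i^q / delta_i],
   and summing over [i < m] the middle terms telescope to [m^2 V_m^p = 0]. *)
From Stdlib Require Import Reals Lra Psatz Lia.
Open Scope R_scope.

(* [Rpower 0 p = exp (p * ln 0) = 1]; the power of a vanishing tail sum has to
   be set to [0] by hand. *)
Definition Rpower0 (x p : R) : R := if Rlt_dec 0 x then Rpower x p else 0.

Lemma Rpower0_pos (x p : R) : 0 < x -> Rpower0 x p = Rpower x p.
Proof. intros Hx; unfold Rpower0; destruct (Rlt_dec 0 x); [reflexivity | lra]. Qed.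

Lemma Rpower0_ge0 (x p : R) : 0 <= Rpower0 x p.
Proof.
  unfold Rpower0, Rpower; destruct (Rlt_dec 0 x); [left; apply exp_pos | lra].
Qed.

Lemma Rpower_le_exp_pred (t p : R) : 0 < t -> 0 <= p -> Rpower t p <= exp (p * (t - 1)).
Proof.
  intros Ht Hp; unfold Rpower.
  assert (Hln : ln t <= t - 1).
  { pose proof (exp_ineq1_le (ln t)) as H; rewrite exp_ln in H by exact Ht; lra. }
  assert (Hle : p * ln t <= p * (t - 1)) by nra.
  destruct Hle as [Hlt | ->]; [left; now apply exp_increasing | right; reflexivity].
Qed.

Lemma Rpower_mul_one_add_le (t p : R) : 0 < t -> 0 <= p ->
  Rpower t p * (1 + p * (1 - t)) <= 1.
Proof.
  intros Ht Hp.
  assert (Hpow : 0 < Rpower t p) by apply exp_pos.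
  destruct (Rle_lt_dec 0 (1 + p * (1 - t))) as [Hnn | Hneg]; [| nra].
  apply Rle_trans with (exp (p * (t - 1)) * exp (p * (1 - t))).
  - apply Rmult_le_compat; [lra | lra | now apply Rpower_le_exp_pred | apply exp_ineq1_le].
  - rewrite <- exp_plus, <- exp_0; right; f_equal; ring.
Qed.

Lemma Rpower0_sub_mul_le (x d p : R) : 0 < x -> 0 <= d <= x -> 0 <= p ->
  Rpower0 (x - d) p * (x + p * d) <= x * Rpower x p.
Proof.
  intros Hx Hd Hp.
  assert (Hxp : 0 < Rpower x p) by apply exp_pos.
  destruct (Req_dec d x) as [-> | Hdx].
  - unfold Rpower0; destruct (Rlt_dec 0 (x - x)); [lra | nra].
  - set (t := (x - d) / x).
    assert (Ht : 0 < t) by (unfold t; apply Rdiv_lt_0_compat; lra).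
    rewrite Rpower0_pos by lra.
    replace (x - d) with (x * t) by (unfold t; field; lra).
    replace (x + p * d) with (x * (1 + p * (1 - t))) by (unfold t; field; lra).
    rewrite <- Rpower_mult_distr by lra.
    pose proof (Rpower_mul_one_add_le t p Ht Hp).
    assert (0 < x * Rpower x p) by nra.
    nra.
Qed.

(* The coefficient [i - i^2] is negative for [i >= 1]; it is beaten by [4 x^2]
   after completing the square in [u = D (i - 1)]. *)
Lemma quadratic_weight_le (x D i : R) : 0 < x -> 0 <= D -> (i = 0 \/ 1 <= i) ->
  D * (i - i * i) * (x + D) + D * ((i + 1) * (i + 1)) * x <= 4 * x * (x + D).
Proof.
  intros Hx HD [-> | Hi]; [nra |].
  set (u := D * (i - 1)).
  assert (Hu : 0 <= u) by (unfold u; nra).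
  assert (HDi : 0 <= D * D * (i - 1)) by (apply Rmult_le_pos; nra).
  assert (Hsq : 0 <= (u - 3 / 2 * x) * (u - 3 / 2 * x)) by apply Rle_0_sqr.
  assert (E : 4 * x * (x + D) - D * (i - i * i) * (x + D) - D * ((i + 1) * (i + 1)) * x
              = 4 * x * x - 3 * x * u + u * u + D * D * (i - 1)) by (unfold u; ring).
  nra.
Qed.

Lemma weighted_step_le (x d p a b i : R) : 0 < x -> 0 < d -> 0 < p -> 0 < a -> 0 <= b ->
  b * (x + p * d) <= x * a -> (i = 0 \/ 1 <= i) ->
  p / 4 * (i * a + (i + 1) * (i + 1) * b - i * i * a) <= x * a / d.
Proof.
  intros Hx Hd Hp Ha Hb Hba Hi.
  assert (HD : 0 <= p * d) by nra.
  pose proof (quadratic_weight_le x (p * d) i Hx HD Hi) as Hquad.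
  set (c := x + p * d) in *.
  assert (Hc : 0 < c) by (unfold c; lra).
  apply Rmult_le_reg_r with (4 * d * c); [nra |].
  replace (x * a / d * (4 * d * c)) with (4 * x * c * a) by (field; lra).
  replace (p / 4 * (i * a + (i + 1) * (i + 1) * b - i * i * a) * (4 * d * c))
    with (p * d * (i - i * i) * c * a + p * d * ((i + 1) * (i + 1)) * (b * c)) by field.
  assert (p * d * ((i + 1) * (i + 1)) * (b * c) <= p * d * ((i + 1) * (i + 1)) * (x * a))
    by (apply Rmult_le_compat_l; nra).
  nra.
Qed.

Lemma rsum_le (f g : nat -> R) (a k : nat) :
  (forall i, (a <= i < a + k)%nat -> f i <= g i) -> rsum f a k <= rsum g a k.
Proof.
  revert a; induction k as [| k IHk]; intros a H; simpl; [lra |].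
  assert (f a <= g a) by (apply H; lia).
  assert (rsum f (S a) k <= rsum g (S a) k) by (apply IHk; intros; apply H; lia).
  lra.
Qed.

Lemma rsum_plus (f g : nat -> R) (a k : nat) :
  rsum (fun i => f i + g i) a k = rsum f a k + rsum g a k.
Proof. revert a; induction k as [| k IHk]; intros a; simpl; rewrite ?IHk; ring. Qed.

Lemma rsum_scal (c : R) (f : nat -> R) (a k : nat) :
  rsum (fun i => c * f i) a k = c * rsum f a k.
Proof. revert a; induction k as [| k IHk]; intros a; simpl; rewrite ?IHk; ring. Qed.

Lemma rsum_telescope (g : nat -> R) (a k : nat) :
  rsum (fun i => g (S i) - g i) a k = g (a + k)%nat - g a.
Proof.
  revert a; induction k as [| k IHk]; intros a; simpl.
  - rewrite Nat.add_0_r; ring.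
  - rewrite IHk; replace (S a + k)%nat with (a + S k)%nat by lia; ring.
Qed.

Lemma V_succ (delta : nat -> R) (m i : nat) :
  (i < m)%nat -> V delta m i = delta i + V delta m (S i).
Proof. intros H; unfold V; replace (m - i)%nat with (S (m - S i)) by lia; reflexivity. Qed.

Lemma V_ge (delta : nat -> R) (m i : nat) : (m <= i)%nat -> V delta m i = 0.
Proof. intros H; unfold V; replace (m - i)%nat with 0%nat by lia; reflexivity. Qed.

Section TailSums.

Variables (delta : nat -> R) (m : nat).
Hypothesis delta_pos : forall i, (i < m)%nat -> 0 < delta i.

Lemma V_ge0 (i : nat) : 0 <= V delta m i.
Proof.
  remember (m - i)%nat as k eqn:Hk; revert i Hk.
  induction k as [| k IHk]; intros i Hk.
  - rewrite V_ge by lia; lra.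
  - rewrite V_succ by lia.
    assert (0 < delta i) by (apply delta_pos; lia).
    assert (0 <= V delta m (S i)) by (apply IHk; lia).
    lra.
Qed.

Lemma V_pos (i : nat) : (i < m)%nat -> 0 < V delta m i.
Proof.
  intros Hi; rewrite V_succ by exact Hi.
  assert (0 < delta i) by (apply delta_pos; exact Hi).
  pose proof (V_ge0 (S i)); lra.
Qed.

Variable p : R.
Hypothesis p_pos : 0 < p.

Let g (i : nat) : R := INR i * INR i * Rpower0 (V delta m i) p.

Lemma V_term_ge (i : nat) : (i < m)%nat ->
  p / 4 * (INR i * Rpower (V delta m i) p) + p / 4 * (g (S i) - g i)
  <= Rpower (V delta m i) (p + 1) / delta i.
Proof.
  intros Hi.
  set (x := V delta m i).
  assert (Hx : 0 < x) by (apply V_pos; exact Hi).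
  assert (Hd : 0 < delta i) by (apply delta_pos; exact Hi).
  assert (Ha : 0 < Rpower x p) by apply exp_pos.
  assert (Hnext : V delta m (S i) = x - delta i)
    by (unfold x; rewrite (V_succ delta m i Hi); ring).
  assert (Hb : Rpower0 (V delta m (S i)) p * (x + p * delta i) <= x * Rpower x p).
  { rewrite Hnext; apply Rpower0_sub_mul_le; [exact Hx | | lra].
    pose proof (V_ge0 (S i)); lra. }
  assert (HI : INR i = 0 \/ 1 <= INR i).
  { destruct i; [left; reflexivity | right; apply (le_INR 1); lia]. }
  pose proof (weighted_step_le x (delta i) p (Rpower x p) _ (INR i)
                Hx Hd p_pos Ha (Rpower0_ge0 _ _) Hb HI) as Hstep.
  unfold g; rewrite S_INR, (Rpower0_pos x) by exact Hx; fold x.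
  rewrite Rpower_plus, Rpower_1 by exact Hx.
  rewrite (Rmult_comm (Rpower x p) x).
  lra.
Qed.

Lemma rsum_V_ge :
  rsum (fun i => Rpower (V delta m i) (p + 1) / delta i) 0 m >=
  p / 4 * rsum (fun j => INR j * Rpower (V delta m j) p) 0 m.
Proof.
  apply Rle_ge.
  eapply Rle_trans; [| apply rsum_le; intros i Hi; apply V_term_ge; lia].
  rewrite rsum_plus, !rsum_scal, rsum_telescope.
  assert (Hg0 : g 0 = 0) by (unfold g; simpl; ring).
  assert (Hgm : g (0 + m) = 0)
    by (unfold g, Rpower0; rewrite V_ge by lia; destruct (Rlt_dec 0 0); [lra | ring]).
  rewrite Hg0, Hgm; lra.
Qed.

End TailSums.

Theorem lemma6p6 (q : R) (m : nat) (delta : nat -> R) :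
  1 < q ->
  (forall i, (i < m)%nat -> 0 < delta i) ->
  rsum (fun i => Rpower (V delta m i) q / delta i) 0 m >=
  (q - 1) / 4 * rsum (fun j => INR j * Rpower (V delta m j) (q - 1)) 1 (m - 1).
Proof.
  intros Hq Hd.
  pose proof (rsum_V_ge delta m Hd (q - 1) ltac:(lra)) as H.
  replace (q - 1 + 1) with q in H by ring.
  destruct m as [| k]; [exact H |].
  simpl rsum at 2 in H; rewrite Nat.sub_1_r; simpl pred.
  rewrite Rmult_0_l, Rplus_0_l in H; exact H.
Qed.
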